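(* Let $(X,d,\ll,\le,\tau)$ and $(Y,\widetilde d,\widetilde\ll,\widetilde\le,\widetilde\tau)$ be Lorentzian length spaces. If $(X,d,\ll,\le,\tau)$ is strongly causal, $(Y,\widetilde d)$ is locally compact, and $f:X\to Y$ is a surjective distance homothetic map, then $f$ is a homeomorphism (with respect to the metric topologies) and $(Y,\widetilde d,\widetilde\ll,\widetilde\le,\widetilde\tau)$ is strongly causal.
   Context: A causal space $(X,\ll,\le)$ is a set $X$ with two transitive relations $\ll,\le$ such that $\le$ is reflexive and $x\ll y\Rightarrow x\le y$; write $p<q$ if $p\le q$ and $p\neq q$. Set $I^+(x)=\{y: x\ll y\}$, $I^-(x)=\{y: y\ll x\}$, $J^+(x)=\{y:x\le y\}$, $J^-(x)=\{y:y\le x\}$. A Lorentzian pre-length space $(X,d,\ll,\le,\tau)$ is a causal space together with a metric $d$ on $X$ and a function $\tau:X\times X\to[0,\infty]$ that is lower semicontinuous with respect to the topology of $d$, satisfies $\tau(x,z)\ge\tau(x,y)+\tau(y,z)$ whenever $x\le y\le z$, $\tau(x,y)=0$ if $x\not\le y$, and $\tau(x,y)>0\iff x\ll y$. All topological notions refer to the metric topology of $d$. A future directed causal (resp. timelike) curve is a non-constant Lipschitz map $\gamma:I\to X$ ($I\subset\mathbb R$ an interval) with $\gamma(s)\le\gamma(t)$ (resp. $\gamma(s)\ll\gamma(t)$) for all $s<t$. For a future directed causal $\gamma:[a,b]\to X$, $L_\tau(\gamma)=\inf\sum_{i=0}^{N-1}\tau(\gamma(t_i),\gamma(t_{i+1}))$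 over all partitions $a=t_0<\dots<t_N=b$. The space is causally path connected if whenever $x\le y$ (resp. $x\ll y$) there is a future directed causal (resp. timelike) curve from $x$ to $y$. For open $U\subset X$, $p\le_U q$ means there is a future directed causal curve from $p$ to $q$ with image in $U$. A neighborhood $U$ is causally closed if whenever $p_n\le_U q_n$ with $p_n\to p\in U$, $q_n\to q\in U$, then $p\le_U q$; the space is locally causally closed if every point has a causally closed neighborhood. The space is localizable if every $x$ has a neighborhood $\Omega_x$ such that: (i) all causal curves contained in $\Omega_x$ have uniformly bounded $d$-length; (ii) there is a continuous $\omega_x:\Omega_x\times\Omega_x\to[0,\infty)$ such that $(\Omega_x,d|_{\Omega_x\times\Omega_x},\ll|_{\Omega_x},\le|_{\Omega_x},\omega_x)$ is a Lorentzian pre-length space, and $I^\pm(y)\cap\Omega_x\ne\emptyset$ for every $y\in\Omega_x$; (iii) for all $p,q\in\Omega_x$ with $p<q$ there is a future causal curve $\gamma_{p,q}$ from $p$ to $q$ with $L_\tau(\gamma_{p,q})\ge L_\tau(\gamma)$ for every future causal curve $\gamma\subset\Omega_x$ from $p$ to $q$, and $L_\tau(\gamma_{p,q})=\omega_x(p,q)$. A Lorentzian length space is a causally path connected, locally causally closed, localizable Lorentzian pre-length space with $\tau(x,y)=\sup\{L_\tau(\gamma):\gamma$ a future causal curve from $x$ to $y\}$. Strongly causal: the Alexandrov topology (subbase $\{I^+(x)\cap I^-(y)\}$) coincides with the metric topology. A map $f:X\to Y$ is distance homothetic if there is $c>0$ with $\widetilde\tau(f(p),f(q))=c\,\tau(p,q)$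 for all $p,q\in X$. *)

From Stdlib Require Import Reals List.
From Coquelicot Require Import Coquelicot.
Open Scope R_scope.

Section LLS.
Context {X : Type}.

Definition is_metric (d : X -> X -> R) : Prop :=
  (forall x y, 0 <= d x y) /\
  (forall x y, d x y = 0 <-> x = y) /\
  (forall x y, d x y = d y x) /\
  (forall x y z, d x z <= d x y + d y z).

Definition open_set (d : X -> X -> R) (U : X -> Prop) : Prop :=
  forall x, U x -> exists e, 0 < e /\ forall y, d x y < e -> U y.

Definition nbhd (d : X -> X -> R) (N : X -> Prop) (x : X) : Prop :=
  exists U, open_set d U /\ U x /\ forall y, U y -> N y.

Definition converges (d : X -> X -> R) (s : nat -> X) (p : X) : Prop :=
  forall e, 0 < e -> exists M, forall n, (M <= n)%nat -> d (s n) p < e.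

Definition compact_set (d : X -> X -> R) (K : X -> Prop) : Prop :=
  forall (I : Type) (U : I -> X -> Prop),
    (forall i, open_set d (U i)) ->
    (forall x, K x -> exists i, U i x) ->
    exists l : list I, forall x, K x -> exists i, In i l /\ U i x.

Definition locally_compact (d : X -> X -> R) : Prop :=
  forall x, exists K, compact_set d K /\ nbhd d K x.

Definition lsc2 (d : X -> X -> R) (tau : X -> X -> Rbar) : Prop :=
  forall x y (r : R), Rbar_lt r (tau x y) ->
    exists e, 0 < e /\ forall x' y', d x x' < e -> d y y' < e -> Rbar_lt r (tau x' y').

Definition causal_space (ll le : X -> X -> Prop) : Prop :=
  (forall x y z, ll x y -> ll y z -> ll x z) /\
  (forall x y z, le x y -> le y z -> le x z) /\
  (forall x, le x x) /\
  (forall x y, ll x y -> le x y).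

Definition LPLS (d : X -> X -> R) (ll le : X -> X -> Prop) (tau : X -> X -> Rbar) : Prop :=
  is_metric d /\ causal_space ll le /\ lsc2 d tau /\
  (forall x y, Rbar_le (Finite 0) (tau x y)) /\
  (forall x y z, le x y -> le y z -> Rbar_le (Rbar_plus (tau x y) (tau y z)) (tau x z)) /\
  (forall x y, ~ le x y -> tau x y = Finite 0) /\
  (forall x y, Rbar_lt (Finite 0) (tau x y) <-> ll x y).

Definition is_interval (I : R -> Prop) : Prop :=
  forall s t u, I s -> I u -> s <= t <= u -> I t.

Definition lipschitz_on (d : X -> X -> R) (I : R -> Prop) (g : R -> X) : Prop :=
  exists L, forall s t, I s -> I t -> d (g s) (g t) <= L * Rabs (s - t).

Definition nonconstant_on (I : R -> Prop) (g : R -> X) : Prop :=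
  exists s t, I s /\ I t /\ g s <> g t.

(** future directed causal curve g : I -> X (g only matters on I) *)
Definition fd_causal_curve (d : X -> X -> R) (le : X -> X -> Prop)
  (I : R -> Prop) (g : R -> X) : Prop :=
  is_interval I /\ lipschitz_on d I g /\ nonconstant_on I g /\
  (forall s t, I s -> I t -> s < t -> le (g s) (g t)).

Definition fd_timelike_curve (d : X -> X -> R) (ll : X -> X -> Prop)
  (I : R -> Prop) (g : R -> X) : Prop :=
  is_interval I /\ lipschitz_on d I g /\ nonconstant_on I g /\
  (forall s t, I s -> I t -> s < t -> ll (g s) (g t)).

Definition cc (a b : R) : R -> Prop := fun t => a <= t <= b.

Definition causal_from_to (d : X -> X -> R) (le : X -> X -> Prop)
  (g : R -> X) (a b : R) (p q : X) : Prop :=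
  a < b /\ fd_causal_curve d le (cc a b) g /\ g a = p /\ g b = q.

Definition timelike_from_to (d : X -> X -> R) (ll : X -> X -> Prop)
  (g : R -> X) (a b : R) (p q : X) : Prop :=
  a < b /\ fd_timelike_curve d ll (cc a b) g /\ g a = p /\ g b = q.

Definition partition (a b : R) (N : nat) (t : nat -> R) : Prop :=
  t O = a /\ t N = b /\ forall i, (i < N)%nat -> t i < t (S i).

Fixpoint rsum (g : nat -> Rbar) (n : nat) : Rbar :=
  match n with O => Finite 0 | S n => Rbar_plus (rsum g n) (g n) end.

Fixpoint sumR (g : nat -> R) (n : nat) : R :=
  match n with O => 0 | S n => sumR g n + g n end.

Definition Ltau (tau : X -> X -> Rbar) (g : R -> X) (a b : R) : Rbar :=
  Rbar_glb (fun v => exists N t, partition a b N t /\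
             v = rsum (fun i => tau (g (t i)) (g (t (S i)))) N).

Definition dlength_le (d : X -> X -> R) (I : R -> Prop) (g : R -> X) (C : R) : Prop :=
  forall N (t : nat -> R), (forall i, (i <= N)%nat -> I (t i)) ->
    (forall i, (i < N)%nat -> t i < t (S i)) ->
    sumR (fun i => d (g (t i)) (g (t (S i)))) N <= C.

End LLS.

Section LLS2.
Context {X : Type}.

Definition causally_path_connected (d : X -> X -> R) (ll le : X -> X -> Prop) : Prop :=
  (forall x y, le x y -> x <> y -> exists g a b, causal_from_to d le g a b x y) /\
  (forall x y, ll x y -> exists g a b, timelike_from_to d ll g a b x y).

Definition le_in (d : X -> X -> R) (le : X -> X -> Prop) (U : X -> Prop) (p q : X) : Prop :=
  p = q \/ exists g a b, causal_from_to d le g a b p q /\ forall s, a <= s <= b -> U (g s).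

Definition causally_closed (d : X -> X -> R) (le : X -> X -> Prop) (U : X -> Prop) : Prop :=
  forall (ps qs : nat -> X) p q,
    (forall n, le_in d le U (ps n) (qs n)) ->
    converges d ps p -> converges d qs q -> U p -> U q -> le_in d le U p q.

Definition locally_causally_closed (d : X -> X -> R) (le : X -> X -> Prop) : Prop :=
  forall x, exists U, open_set d U /\ U x /\ causally_closed d le U.

Definition localizable (d : X -> X -> R) (ll le : X -> X -> Prop) (tau : X -> X -> Rbar) : Prop :=
  forall x, exists (Om : X -> Prop) (om : sig Om -> sig Om -> R),
    nbhd d Om x /\
    (exists C, forall I g, fd_causal_curve d le I g -> (forall s, I s -> Om (g s)) ->
        dlength_le d I g C) /\
    (forall p q (e : R), 0 < e -> exists del, 0 < del /\ forall p' q' : sig Om,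
        d (proj1_sig p) (proj1_sig p') < del -> d (proj1_sig q) (proj1_sig q') < del ->
        Rabs (om p' q' - om p q) < e) /\
    LPLS (fun p q : sig Om => d (proj1_sig p) (proj1_sig q))
         (fun p q : sig Om => ll (proj1_sig p) (proj1_sig q))
         (fun p q : sig Om => le (proj1_sig p) (proj1_sig q))
         (fun p q : sig Om => Finite (om p q)) /\
    (forall y : sig Om, (exists z : sig Om, ll (proj1_sig y) (proj1_sig z)) /\
                        (exists z : sig Om, ll (proj1_sig z) (proj1_sig y))) /\
    (forall p q : sig Om, le (proj1_sig p) (proj1_sig q) -> proj1_sig p <> proj1_sig q ->
       exists g a b, causal_from_to d le g a b (proj1_sig p) (proj1_sig q) /\
         (forall g' a' b', causal_from_to d le g' a' b' (proj1_sig p) (proj1_sig q) ->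
            (forall s, a' <= s <= b' -> Om (g' s)) ->
            Rbar_le (Ltau tau g' a' b') (Ltau tau g a b)) /\
         Ltau tau g a b = Finite (om p q)).

(** tau is the sup of tau-lengths of future causal curves (sup of the empty set := 0) *)
Definition LLS (d : X -> X -> R) (ll le : X -> X -> Prop) (tau : X -> X -> Rbar) : Prop :=
  LPLS d ll le tau /\ causally_path_connected d ll le /\
  locally_causally_closed d le /\ localizable d ll le tau /\
  (forall x y, tau x y = Rbar_lub (fun v => v = Finite 0 \/
      exists g a b, causal_from_to d le g a b x y /\ v = Ltau tau g a b)).

(** Alexandrov topology: subbase I^+(x) /\ I^-(y) *)
Definition alex_open (ll : X -> X -> Prop) (U : X -> Prop) : Prop :=
  forall p, U p -> exists l : list (X * X),
    (forall xy, In xy l -> ll (fst xy) p /\ ll p (snd xy)) /\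
    (forall q, (forall xy, In xy l -> ll (fst xy) q /\ ll q (snd xy)) -> U q).

Definition strongly_causal (d : X -> X -> R) (ll : X -> X -> Prop) : Prop :=
  forall U, alex_open ll U <-> open_set d U.
End LLS2.

Definition continuous_map {X Y : Type} (d : X -> X -> R) (d' : Y -> Y -> R) (f : X -> Y) : Prop :=
  forall V, open_set d' V -> open_set d (fun x => V (f x)).

Definition homeomorphism {X Y : Type} (d : X -> X -> R) (d' : Y -> Y -> R) (f : X -> Y) : Prop :=
  exists g : Y -> X, (forall x, g (f x) = x) /\ (forall y, f (g y) = y) /\
    continuous_map d d' f /\ continuous_map d' d g.

Definition distance_homothetic {X Y : Type} (tau : X -> X -> Rbar) (tau' : Y -> Y -> Rbar)
  (f : X -> Y) : Prop :=
  exists c : R, 0 < c /\ forall p q, tau' (f p) (f q) = Rbar_mult (Finite c) (tau p q).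

(** A distance homothety preserves and reflects [≪], so [f] is an isomorphism
    of chronological structures.  Strong causality of [X] makes distinct points
    separable by Alexandrov-open sets, which forces [f] to be injective; hence
    [f] is a bijection whose inverse [g] pulls Alexandrov-open sets back to
    Alexandrov-open sets.  These are metric-open in [Y] since [τ̃] is lower
    semicontinuous, so [g] is continuous.
    For continuity of [f] at [x], let [K] be a compact neighbourhood of [f x]
    and [r] small.  The compact set [g(K \ B(f x, r))] misses [x], so some
    Alexandrov neighbourhood [N] of [x] misses it too.  [N] is causally convex
    and timelike curves of [Y] are continuous, so by the intermediate value
    theorem the condition [d̃(f x, f ·) < r] cannot change along [≪] inside [N].
    It holds at [x], hence at a point [a ≪ x] of [N] close to [x], hence on the
    metric neighbourhood [N ∩ I⁺(a)] of [x].  Finally a homeomorphism that is a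
    chronological isomorphism transports strong causality. *)

From Stdlib Require Import Reals Lra List Classical ClassicalEpsilon FunctionalExtensionality.
From Coquelicot Require Import Coquelicot.
Open Scope R_scope.

Section Metric.
Context {Z : Type} (d : Z -> Z -> R).
Hypothesis d_metric : is_metric d.

Lemma dist_refl x : d x x = 0.
Proof. destruct d_metric as [_ [H _]]. now apply H. Qed.

Lemma dist_sym x y : d x y = d y x.
Proof. destruct d_metric as [_ [_ [H _]]]. apply H. Qed.

Lemma dist_triangle x y z : d x z <= d x y + d y z.
Proof. destruct d_metric as [_ [_ [_ H]]]. apply H. Qed.

Lemma dist_pos_neq x y : x <> y -> 0 < d x y.
Proof.
  intro Hxy. destruct d_metric as [Hge [Heq _]].
  destruct (Hge x y) as [H|H]; [exact H|].
  exfalso. apply Hxy, Heq. now symmetry.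
Qed.

Lemma Rabs_dist_sub_le y u v : Rabs (d y u - d y v) <= d u v.
Proof.
  pose proof (dist_triangle y u v). pose proof (dist_triangle y v u).
  rewrite (dist_sym v u) in *. unfold Rabs; destruct Rcase_abs; lra.
Qed.

Lemma ball_open c r : open_set d (fun x => d c x < r).
Proof.
  intros x hx. exists (r - d c x). split; [lra|].
  intros y hy. pose proof (dist_triangle c x y). lra.
Qed.

Lemma point_complement_open q : open_set d (fun z => z <> q).
Proof.
  intros x hx. exists (d x q). split; [now apply dist_pos_neq|].
  intros y hy ->. lra.
Qed.

Lemma open_set_ext (U V : Z -> Prop) :
  (forall x, U x <-> V x) -> open_set d U -> open_set d V.
Proof.
  intros HUV HU x Vx. destruct (HU x (proj2 (HUV x) Vx)) as [e [he He]].
  exists e. split; [exact he|]. intros y hy. now apply HUV, He.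
Qed.

Lemma open_set_and (U V : Z -> Prop) :
  open_set d U -> open_set d V -> open_set d (fun x => U x /\ V x).
Proof.
  intros HU HV x [Ux Vx].
  destruct (HU x Ux) as [e1 [he1 He1]]. destruct (HV x Vx) as [e2 [he2 He2]].
  exists (Rmin e1 e2). split; [now apply Rmin_pos|].
  intros y hy. pose proof (Rmin_l e1 e2). pose proof (Rmin_r e1 e2).
  split; [apply He1|apply He2]; lra.
Qed.

Lemma compact_diff_open (K O : Z -> Prop) :
  compact_set d K -> open_set d O -> compact_set d (fun x => K x /\ ~ O x).
Proof.
  intros HK HO I U HU Hcov.
  destruct (HK (option I) (fun i => match i with Some j => U j | None => O end))
    as [l Hl].
  - intros [j|]; auto.
  - intros x Kx. destruct (classic (O x)) as [Ox|Ox]; [now exists None|].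
    destruct (Hcov x (conj Kx Ox)) as [j Hj]. now exists (Some j).
  - exists (flat_map (fun i => match i with Some j => j :: nil | None => nil end) l).
    intros x [Kx Ox]. destruct (Hl x Kx) as [[j|] [Hin Hj]]; [|contradiction].
    exists j. split; [|exact Hj]. apply in_flat_map. exists (Some j). simpl; auto.
Qed.

Lemma list_min_pos {I : Type} (rad : I -> R) (l : list I) :
  (forall i, 0 < rad i) -> exists m, 0 < m /\ forall i, In i l -> m <= rad i.
Proof.
  intro Hrad. induction l as [|i l [m [hm Hm]]].
  - exists 1. split; [lra|]. intros i [].
  - exists (Rmin (rad i) m). split; [now apply Rmin_pos|].
    intros j [<-|Hj]; [apply Rmin_l|].
    eapply Rle_trans; [apply Rmin_r|auto].
Qed.

Lemma compact_dist_pos (K : Z -> Prop) x0 :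
  compact_set d K -> ~ K x0 -> exists m, 0 < m /\ forall w, K w -> m <= d x0 w.
Proof.
  intros HK Kx0.
  assert (Hpos : forall w : sig K, 0 < d x0 (proj1_sig w) / 2).
  { intros [w Kw]. simpl. assert (Hne : x0 <> w) by congruence.
    pose proof (dist_pos_neq x0 w Hne). lra. }
  destruct (HK (sig K) (fun w z => d (proj1_sig w) z < d x0 (proj1_sig w) / 2))
    as [l Hl].
  - intro w. apply ball_open.
  - intros z Kz. exists (exist _ z Kz). simpl. rewrite dist_refl.
    exact (Hpos (exist _ z Kz)).
  - destruct (list_min_pos (fun w : sig K => d x0 (proj1_sig w) / 2) l Hpos)
      as [m [hm Hm]].
    exists m. split; [exact hm|]. intros w Kw.
    destruct (Hl w Kw) as [i [Hin Hiw]]. specialize (Hm i Hin).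
    pose proof (dist_triangle x0 w (proj1_sig i)). rewrite (dist_sym w) in *. lra.
Qed.
End Metric.

Lemma compact_image {A B : Type} (dA : A -> A -> R) (dB : B -> B -> R) (h : A -> B) K :
  continuous_map dA dB h -> compact_set dA K ->
  compact_set dB (fun y => exists x, K x /\ h x = y).
Proof.
  intros Hh HK I U HU Hcov.
  destruct (HK I (fun i x => U i (h x))) as [l Hl].
  - intro i. now apply Hh.
  - intros x Kx. apply Hcov. eauto.
  - exists l. intros y [x [Kx <-]]. auto.
Qed.

Definition diamonds {Z : Type} (ll : Z -> Z -> Prop) (l : list (Z * Z)) (q : Z) : Prop :=
  forall xy, In xy l -> ll (fst xy) q /\ ll q (snd xy).

Lemma diamonds_convex {Z : Type} (ll : Z -> Z -> Prop) l a b z :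
  (forall x y w, ll x y -> ll y w -> ll x w) ->
  diamonds ll l a -> diamonds ll l b -> ll a z -> (z = b \/ ll z b) ->
  diamonds ll l z.
Proof.
  intros Htr Ha Hb Haz Hzb xy Hin.
  destruct (Ha xy Hin) as [Hxa _]. destruct (Hb xy Hin) as [_ Hby].
  split; [eauto|]. destruct Hzb as [->|Hzb]; eauto.
Qed.

Section Chronology.
Context {Z : Type} (d : Z -> Z -> R) (ll : Z -> Z -> Prop) (tau : Z -> Z -> Rbar).
Hypothesis d_metric : is_metric d.
Hypothesis tau_lsc : lsc2 d tau.
Hypothesis tau_pos_ll : forall x y, Rbar_lt (Finite 0) (tau x y) <-> ll x y.

Lemma chrono_future_open a : open_set d (ll a).
Proof.
  intros p Hp. apply tau_pos_ll in Hp. destruct (tau_lsc a p 0 Hp) as [e [he He]].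
  exists e. split; [exact he|]. intros q hq.
  apply tau_pos_ll, He; [rewrite dist_refl|]; auto.
Qed.

Lemma chrono_past_open b : open_set d (fun p => ll p b).
Proof.
  intros p Hp. apply tau_pos_ll in Hp. destruct (tau_lsc p b 0 Hp) as [e [he He]].
  exists e. split; [exact he|]. intros q hq.
  apply tau_pos_ll, He; [|rewrite dist_refl]; auto.
Qed.

Lemma diamonds_open l : open_set d (diamonds ll l).
Proof.
  induction l as [|xy l IH].
  - intros x _. exists 1. split; [lra|]. intros y _ xy [].
  - apply open_set_ext with
      (fun q => (ll (fst xy) q /\ ll q (snd xy)) /\ diamonds ll l q).
    + intro q. split.
      * intros [Hq Hl] xy' [<-|Hin]; auto.
      * intro Hq. split; [apply Hq; now left|]. intros xy' Hin. apply Hq. now right.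
    + apply open_set_and; [apply open_set_and|]; auto.
      * apply chrono_future_open.
      * apply chrono_past_open.
Qed.

Lemma alex_open_open U : alex_open ll U -> open_set d U.
Proof.
  intros HU x Ux. destruct (HU x Ux) as [l [Hx Hsub]].
  destruct (diamonds_open l x Hx) as [e [he He]].
  exists e. split; [exact he|]. intros y hy. apply Hsub, He, hy.
Qed.
End Chronology.

Lemma alex_open_preimage {A B : Type} (llA : A -> A -> Prop) (llB : B -> B -> Prop)
  (h : B -> A) (k : A -> B) :
  (forall a, h (k a) = a) -> (forall u v, llA (h u) (h v) <-> llB u v) ->
  forall U, alex_open llA U -> alex_open llB (fun b => U (h b)).
Proof.
  intros hK h_ll U HU b Ub. destruct (HU (h b) Ub) as [l [Hb Hsub]].
  exists (map (fun xy => (k (fst xy), k (snd xy))) l). split.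
  - intros xy' Hin. apply in_map_iff in Hin as [xy [<- Hin]]. simpl.
    rewrite <- !h_ll, !hK. auto.
  - intros q Hq. apply Hsub. intros xy Hin.
    destruct (Hq (k (fst xy), k (snd xy))) as [H1 H2]; [apply in_map_iff; eauto|].
    simpl in H1, H2. rewrite <- h_ll, hK in H1, H2. auto.
Qed.

Lemma strongly_causal_distinguishing {Z : Type} (d : Z -> Z -> R) ll p q :
  is_metric d -> strongly_causal d ll ->
  (forall a, ll a p -> ll a q) -> (forall b, ll p b -> ll q b) -> p = q.
Proof.
  intros Hm SC Hpast Hfut. destruct (classic (p = q)) as [|Hpq]; [assumption|].
  destruct (proj2 (SC _) (point_complement_open d Hm q) p Hpq) as [l [Hp Hsub]].
  exfalso. apply (Hsub q); [|reflexivity].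
  intros xy Hin. destruct (Hp xy Hin). auto.
Qed.

Lemma Rbar_mult_pos_lt_0 c t :
  0 < c -> Rbar_le (Finite 0) t ->
  Rbar_lt (Finite 0) (Rbar_mult (Finite c) t) <-> Rbar_lt (Finite 0) t.
Proof.
  intros Hc Ht. destruct t as [r| |].
  - simpl. split; intro; nra.
  - replace (Rbar_mult (Finite c) p_infty) with p_infty; [tauto|].
    unfold Rbar_mult, Rbar_mult'. simpl.
    destruct (Rle_dec 0 c); [|lra]. destruct (Rle_lt_or_eq_dec 0 c r); [reflexivity|lra].
  - contradiction.
Qed.

Lemma distance_homothetic_chronological {X Y : Type}
  (ll : X -> X -> Prop) (tau : X -> X -> Rbar) (ll' : Y -> Y -> Prop) (tau' : Y -> Y -> Rbar)
  (f : X -> Y) :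
  (forall x y, Rbar_le (Finite 0) (tau x y)) ->
  (forall x y, Rbar_lt (Finite 0) (tau x y) <-> ll x y) ->
  (forall u v, Rbar_lt (Finite 0) (tau' u v) <-> ll' u v) ->
  distance_homothetic tau tau' f -> forall p q, ll' (f p) (f q) <-> ll p q.
Proof.
  intros Hge Hll Hll' [c [Hc Hf]] p q.
  rewrite <- Hll, <- Hll', Hf. now apply Rbar_mult_pos_lt_0.
Qed.

Lemma bijection_inverse {A B : Type} (f : A -> B) :
  (forall y, exists x, f x = y) -> (forall p q, f p = f q -> p = q) ->
  exists g, (forall x, g (f x) = x) /\ (forall y, f (g y) = y).
Proof.
  intros Hsurj Hinj.
  exists (fun y => proj1_sig (constructive_indefinite_description _ (Hsurj y))).
  assert (fK : forall y, f (proj1_sig (constructive_indefinite_description _ (Hsurj y))) = y)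
    by (intro y; exact (proj2_sig (constructive_indefinite_description _ (Hsurj y)))).
  split; [intro x; apply Hinj|]; apply fK.
Qed.

Lemma Rabs_clamp_sub_le a b s t :
  Rabs (Rmax a (Rmin b s) - Rmax a (Rmin b t)) <= Rabs (s - t).
Proof.
  unfold Rmax, Rmin; repeat destruct Rle_dec; unfold Rabs; repeat destruct Rcase_abs; lra.
Qed.

Lemma lipschitz_continuity (h : R -> R) L :
  (forall s t, Rabs (h s - h t) <= L * Rabs (s - t)) -> continuity h.
Proof.
  intros Hh x eps heps. pose proof (Rabs_pos L).
  set (del := eps / (Rabs L + 1)).
  assert (hdel : del * (Rabs L + 1) = eps) by (unfold del; field; lra).
  exists del. split; [unfold del; apply Rdiv_lt_0_compat; lra|].
  intros x' [_ Hx']. change (Rabs (x' - x) < del) in Hx'.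
  change (Rabs (h x' - h x) < eps).
  pose proof (Hh x' x). pose proof (Rle_abs L). pose proof (Rabs_pos (x' - x)).
  assert (L * Rabs (x' - x) <= Rabs L * del) by nra.
  nra.
Qed.

Lemma timelike_curve_level {Z : Type} (d : Z -> Z -> R) ll (F : Z -> R) c s0 s1 p q lam :
  (forall u v, Rabs (F u - F v) <= d u v) ->
  timelike_from_to d ll c s0 s1 p q ->
  (F p < lam < F q \/ F q < lam < F p) ->
  exists w, F w = lam /\ ll p w /\ (w = q \/ ll w q).
Proof.
  intros HF [hs [[_ [[L HL] [_ Hll]]] [<- <-]]] Hlam.
  (* Clamping to [s0, s1] extends the curve to all of R, as [IVT_cor] needs. *)
  set (cl := fun t => Rmax s0 (Rmin s1 t)).
  assert (cl_in : forall t, cc s0 s1 (cl t)).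
  { intro t. unfold cc, cl, Rmax, Rmin. repeat destruct Rle_dec; lra. }
  assert (cl_id : forall t, cc s0 s1 t -> cl t = t).
  { intros t ht. unfold cc, cl, Rmax, Rmin in *. repeat destruct Rle_dec; lra. }
  assert (Hcont : continuity (fun t => F (c (cl t)) - lam)).
  { apply lipschitz_continuity with (Rabs L). intros s t.
    replace (F (c (cl s)) - lam - (F (c (cl t)) - lam)) with
      (F (c (cl s)) - F (c (cl t))) by ring.
    pose proof (HF (c (cl s)) (c (cl t))). pose proof (HL _ _ (cl_in s) (cl_in t)).
    pose proof (Rabs_clamp_sub_le s0 s1 s t). fold (cl s) (cl t) in *.
    pose proof (Rle_abs L). pose proof (Rabs_pos L). pose proof (Rabs_pos (cl s - cl t)).
    nra. }
  destruct (IVT_cor _ s0 s1 Hcont (Rlt_le _ _ hs)) as [z [hz Fz]].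
  { rewrite !cl_id by (unfold cc; lra). destruct Hlam; nra. }
  rewrite cl_id in Fz by exact hz.
  assert (hz0 : s0 < z).
  { destruct (Req_dec z s0) as [->|]; [|lra]. destruct Hlam; lra. }
  exists (c z). split; [lra|]. split.
  - apply Hll; unfold cc; lra.
  - destruct (Req_dec z s1) as [->|]; [now left|right]. apply Hll; unfold cc; lra.
Qed.

Lemma timelike_past_near {Z : Type} (d : Z -> Z -> R) ll z x eps :
  is_metric d -> (exists c a b, timelike_from_to d ll c a b z x) -> 0 < eps ->
  exists w, ll w x /\ d x w < eps.
Proof.
  intros Hm [c [a [b [hab [[_ [[L HL] [_ Hll]]] [_ <-]]]]]] heps.
  pose proof (Rabs_pos L). pose proof (Rle_abs L).
  set (k := eps / (2 * (Rabs L + 1))).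
  assert (hk : 0 < k) by (unfold k; apply Rdiv_lt_0_compat; lra).
  assert (hk2 : k * (2 * (Rabs L + 1)) = eps) by (unfold k; field; lra).
  set (t := Rmax a (b - k)).
  assert (ht : a <= t < b /\ b - t <= k) by (unfold t, Rmax; destruct Rle_dec; lra).
  exists (c t). split; [apply Hll; unfold cc; lra|].
  eapply Rle_lt_trans; [apply HL; unfold cc; lra|].
  rewrite Rabs_right by lra. nra.
Qed.

Lemma localizable_past_nonempty {Z : Type} (d : Z -> Z -> R) ll le tau :
  localizable d ll le tau -> forall x, exists z, ll z x.
Proof.
  intros Hloc x.
  destruct (Hloc x) as [Om [om [[U [_ [Ux HU]]] [_ [_ [_ [Hpast _]]]]]]].
  destruct (Hpast (exist _ x (HU x Ux))) as [_ [[z Om_z] Hz]]. now exists z.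
Qed.

Lemma chrono_convex_level_preserved {Z : Type} (d : Z -> Z -> R) ll (F : Z -> R) r
  (M : Z -> Prop) :
  (forall u v, Rabs (F u - F v) <= d u v) ->
  (forall u v, ll u v -> exists c a b, timelike_from_to d ll c a b u v) ->
  (forall u v w, M u -> M v -> ll u w -> (w = v \/ ll w v) -> M w) ->
  (forall w, M w -> F w <> r) ->
  forall u v, M u -> M v -> ll u v -> (F u < r <-> F v < r).
Proof.
  intros HF Hpath Hconv Hlevel u v Mu Mv Huv.
  assert (Hcross : ~ (F u < r < F v \/ F v < r < F u)).
  { intro Hr. destruct (Hpath u v Huv) as [c [a [b Hc]]].
    destruct (timelike_curve_level d ll F c a b u v r HF Hc Hr) as [w [Fw [Huw Hwv]]].
    exact (Hlevel w (Hconv u v w Mu Mv Huw Hwv) Fw). }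
  pose proof (Hlevel u Mu). pose proof (Hlevel v Mv).
  split; intro.
  - destruct (Rtotal_order (F v) r) as [|[|]]; [assumption|contradiction|].
    exfalso. apply Hcross. now left.
  - destruct (Rtotal_order (F u) r) as [|[|]]; [assumption|contradiction|].
    exfalso. apply Hcross. now right.
Qed.

Section ChronologicalIsomorphismContinuity.
Context {X Y : Type} (d : X -> X -> R) (ll : X -> X -> Prop) (tau : X -> X -> Rbar)
  (d' : Y -> Y -> R) (ll' : Y -> Y -> Prop) (f : X -> Y) (g : Y -> X).
Hypothesis d_metric : is_metric d.
Hypothesis tau_lsc : lsc2 d tau.
Hypothesis tau_pos_ll : forall x y, Rbar_lt (Finite 0) (tau x y) <-> ll x y.
Hypothesis ll_trans : forall x y z, ll x y -> ll y z -> ll x z.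
Hypothesis ll_past_nonempty : forall x, exists z, ll z x.
Hypothesis X_timelike_paths :
  forall x y, ll x y -> exists c a b, timelike_from_to d ll c a b x y.
Hypothesis X_strongly_causal : strongly_causal d ll.
Hypothesis d'_metric : is_metric d'.
Hypothesis Y_locally_compact : locally_compact d'.
Hypothesis Y_timelike_paths :
  forall u v, ll' u v -> exists c a b, timelike_from_to d' ll' c a b u v.
Hypothesis gK : forall x, g (f x) = x.
Hypothesis fK : forall y, f (g y) = y.
Hypothesis g_ll : forall u v, ll (g u) (g v) <-> ll' u v.
Hypothesis g_continuous : continuous_map d' d g.

Lemma inverse_image_far (K : Y -> Prop) x0 r :
  compact_set d' K -> 0 < r ->
  exists del, 0 < del /\ forall w, K w -> r <= d' (f x0) w -> del <= d x0 (g w).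
Proof.
  intros HK hr.
  destruct (compact_dist_pos d d_metric
              (fun x => exists w, (K w /\ ~ d' (f x0) w < r) /\ g w = x) x0)
    as [del [hdel Hdel]].
  - apply (compact_image d' d g (fun w => K w /\ ~ d' (f x0) w < r) g_continuous).
    apply compact_diff_open; [exact HK|now apply ball_open].
  - intros [w [[_ Hw] Hgw]]. apply Hw. rewrite <- Hgw, fK, dist_refl; auto.
  - exists del. split; [exact hdel|]. intros w Kw Hw.
    apply Hdel. exists w. split; [split; [exact Kw|lra]|reflexivity].
Qed.

Lemma chrono_iso_continuous : continuous_map d d' f.
Proof.
  intros V HV x0 Vfx0.
  destruct (Y_locally_compact (f x0)) as [K [HK [U [HU [Ufx0 HUK]]]]].
  destruct (HU _ Ufx0) as [eK [heK HeK]]. destruct (HV _ Vfx0) as [eV [heV HeV]].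
  set (r := Rmin eK eV / 2).
  assert (hr : 0 < r /\ r < eK /\ r < eV).
  { unfold r. pose proof (Rmin_pos eK eV heK heV).
    pose proof (Rmin_l eK eV). pose proof (Rmin_r eK eV). lra. }
  destruct hr as [hr0 [hrK hrV]]. clearbody r.
  destruct (inverse_image_far K x0 r HK hr0) as [del [hdel Hdel]].
  destruct (proj2 (X_strongly_causal _) (ball_open d d_metric x0 del) x0)
    as [l [Hl Hsub]]; [rewrite dist_refl; auto|].
  assert (Hlevel : forall u v, diamonds ll l (g u) -> diamonds ll l (g v) -> ll' u v ->
                     (d' (f x0) u < r <-> d' (f x0) v < r)).
  { apply (chrono_convex_level_preserved d' ll' (d' (f x0)) r
             (fun w => diamonds ll l (g w))).
    - now apply Rabs_dist_sub_le.
    - exact Y_timelike_paths.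
    - intros u v w Mu Mv Huw Hwv.
      apply (diamonds_convex ll l (g u) (g v)); auto; [now apply g_ll|].
      destruct Hwv as [->|Hwv]; [now left|right; now apply g_ll].
    - intros w Mw Hw. pose proof (Hsub _ Mw) as Hnear.
      assert (Hfar : del <= d x0 (g w)) by (apply Hdel; [apply HUK, HeK|]; lra).
      lra. }
  destruct (diamonds_open d ll tau d_metric tau_lsc tau_pos_ll l x0 Hl) as [eN [heN HeN]].
  destruct (ll_past_nonempty x0) as [z Hz].
  destruct (timelike_past_near d ll z x0 eN d_metric (X_timelike_paths z x0 Hz) heN)
    as [a [Hax0 Ha]].
  destruct (chrono_future_open d ll tau d_metric tau_lsc tau_pos_ll a x0 Hax0)
    as [ea [hea Hea]].
  assert (f_ll : forall p q, ll' (f p) (f q) <-> ll p q)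
    by (intros p q; now rewrite <- g_ll, !gK).
  assert (Hfa : d' (f x0) (f a) < r).
  { apply (Hlevel (f a) (f x0)); rewrite ?gK; auto; [now apply f_ll|].
    rewrite dist_refl; auto. }
  exists (Rmin eN ea). split; [now apply Rmin_pos|]. intros x Hx.
  pose proof (Rmin_l eN ea). pose proof (Rmin_r eN ea).
  assert (Hfx : d' (f x0) (f x) < r).
  { apply (Hlevel (f a) (f x)); rewrite ?gK; auto; [apply HeN; lra|].
    apply f_ll, Hea. lra. }
  apply HeV. lra.
Qed.
End ChronologicalIsomorphismContinuity.

Lemma chrono_iso_inverse_continuous {X Y : Type} (d : X -> X -> R) (ll : X -> X -> Prop)
  (d' : Y -> Y -> R) (ll' : Y -> Y -> Prop) (tau' : Y -> Y -> Rbar) (f : X -> Y) (g : Y -> X) :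
  is_metric d' -> lsc2 d' tau' -> (forall u v, Rbar_lt (Finite 0) (tau' u v) <-> ll' u v) ->
  strongly_causal d ll -> (forall x, g (f x) = x) ->
  (forall u v, ll (g u) (g v) <-> ll' u v) -> continuous_map d' d g.
Proof.
  intros Hm Hlsc Hll SC gK g_ll V HV.
  apply (alex_open_open d' ll' tau'); auto.
  apply (alex_open_preimage ll ll' g f); auto. now apply SC.
Qed.

Lemma strongly_causal_transfer {X Y : Type} (d : X -> X -> R) (ll : X -> X -> Prop)
  (d' : Y -> Y -> R) (ll' : Y -> Y -> Prop) (tau' : Y -> Y -> Rbar) (f : X -> Y) (g : Y -> X) :
  is_metric d' -> lsc2 d' tau' -> (forall u v, Rbar_lt (Finite 0) (tau' u v) <-> ll' u v) ->
  strongly_causal d ll -> (forall x, g (f x) = x) -> (forall y, f (g y) = y) ->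
  (forall u v, ll (g u) (g v) <-> ll' u v) -> continuous_map d d' f ->
  strongly_causal d' ll'.
Proof.
  intros Hm Hlsc Hll SC gK fK g_ll f_cont U. split.
  - now apply alex_open_open with tau'.
  - intro HU.
    replace U with (fun v => U (f (g v))) by (extensionality v; now rewrite fK).
    apply (alex_open_preimage ll ll' g f gK g_ll (fun x => U (f x))).
    now apply SC, f_cont.
Qed.

Theorem theorem4p4 (X Y : Type)
  (d : X -> X -> R) (ll le : X -> X -> Prop) (tau : X -> X -> Rbar)
  (d' : Y -> Y -> R) (ll' le' : Y -> Y -> Prop) (tau' : Y -> Y -> Rbar)
  (f : X -> Y) :
  LLS d ll le tau -> LLS d' ll' le' tau' ->
  strongly_causal d ll -> locally_compact d' ->
  (forall y, exists x, f x = y) -> distance_homothetic tau tau' f ->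
  homeomorphism d d' f /\ strongly_causal d' ll'.
Proof.
  intros [[dX [[llX_trans _] [tauX_lsc [tauX_ge0 [_ [_ tauX_ll]]]]]] [[_ pathsX] [_ [locX _]]]]
         [[dY [_ [tauY_lsc [_ [_ [_ tauY_ll]]]]]] [[_ pathsY] _]] SC LC Hsurj Hhom.
  pose proof (distance_homothetic_chronological ll tau ll' tau' f tauX_ge0 tauX_ll tauY_ll Hhom)
    as f_ll.
  assert (f_inj : forall p q, f p = f q -> p = q).
  { intros p q E. apply (strongly_causal_distinguishing d ll); auto.
    - intros a Ha. apply f_ll. rewrite <- E. now apply f_ll.
    - intros b Hb. apply f_ll. rewrite <- E. now apply f_ll. }
  destruct (bijection_inverse f Hsurj f_inj) as [g [gK fK]].
  assert (g_ll : forall u v, ll (g u) (g v) <-> ll' u v)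
    by (intros u v; now rewrite <- f_ll, !fK).
  assert (g_cont : continuous_map d' d g)
    by (now apply (chrono_iso_inverse_continuous d ll d' ll' tau' f g)).
  assert (f_cont : continuous_map d d' f).
  { apply (chrono_iso_continuous d ll tau d' ll' f g); auto.
    now apply (localizable_past_nonempty d ll le tau). }
  split.
  - now exists g.
  - now apply (strongly_causal_transfer d ll d' ll' tau' f g).
Qed.
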